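(* Let $n,m$ be positive integers. The expected number of fixed points of a permutation drawn from the lazy $m$-shelf shuffling distribution $x_m$ on $S_n$ equals $1+2\sum_{k=1}^{(n-1)/2}\frac{1}{(2m+1)^{2k}}$ if $n$ is odd, and $1+2\sum_{k=1}^{n/2-1}\frac{1}{(2m+1)^{2k}}+\frac{1}{(2m+1)^n}$ if $n$ is even.
   Context: $x_m$ is the lazy $m$-shelf shuffling distribution on $S_n$: a deck of cards $1,\ldots,n$ (top to bottom) is processed in order $1,\ldots,n$; each card independently and uniformly chooses one of $2m+1$ options: shelf $0$ (placed below the cards already there), or one of shelves $1,\ldots,m$, placed either on top of or below the cards already there. The piles are then stacked with shelf $0$ on top, then shelf $1$, ..., shelf $m$; $x_m(\pi)$ is the probability that the card in position $i$ from the top is $\pi(i)$ for all $i$. A fixed point of $\pi$ is an $i$ with $\pi(i)=i$. *)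

From mathcomp Require Import all_boot all_order all_algebra all_fingroup.
Set Implicit Arguments. Unset Strict Implicit. Unset Printing Implicit Defensive.
Import GRing.Theory Num.Theory.

(* Cards are 0-indexed: card i : 'I_n stands for card i+1; deck positions too.
   Option encoding for o : 'I_(2m+1):
     o = 0      : shelf 0, placed below the cards already there;
     o = 2j-1   : shelf j (1 <= j <= m), placed on top;
     o = 2j     : shelf j (1 <= j <= m), placed below.
   i.e. shelf = (o+1)/2, on top iff o is odd. *)

Definition shelf_of (k : nat) (o : 'I_k) : nat := (o.+1)./2.
Definition on_top (k : nat) (o : 'I_k) : bool := odd o.

Definition place (n k : nat) (o : 'I_k) (c : 'I_n) (piles : nat -> seq 'I_n)
  : nat -> seq 'I_n :=
  fun s => if s == shelf_of o then
             (if on_top o then c :: piles s else rcons (piles s) c)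
           else piles s.

(* Final deck (top to bottom) given the choices of all cards, processed in
   order 0, ..., n-1; piles stacked shelf 0 on top, then 1, ..., m. *)
Definition shelf_deck (n m : nat) (ch : {ffun 'I_n -> 'I_(2 * m + 1)}) : seq 'I_n :=
  let piles := foldl (fun p (i : 'I_n) => place (ch i) i p)
                     (fun _ => [::]) (enum 'I_n) in
  flatten [seq piles s | s <- iota 0 m.+1].

(* x_m(pi): probability that the card at position i is pi(i) for all i,
   when choices are independent and uniform over the 2m+1 options. *)
Definition lazy_shelf (n m : nat) (pi : 'S_n) : rat :=
  (#|[set ch : {ffun 'I_n -> 'I_(2 * m + 1)} |
       shelf_deck ch == [seq pi i | i <- enum 'I_n]]|)%:R
  / ((2 * m + 1) ^ n)%:R.

Definition num_fixed_points (n : nat) (pi : 'S_n) : nat := #|[set i | pi i == i]|.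

Definition expected_fixed_points (n m : nat) : rat :=
  \sum_(pi : 'S_n) lazy_shelf m pi * (num_fixed_points pi)%:R.

(* The cards above card c in the final deck are the earlier cards not placed
   below it and the later cards placed above it; since exactly c cards precede c
   (counting from 0), c is a fixed point iff as many earlier cards end below it
   as later cards end above it.  For a card of option o inserted at position t
   of a word u of options, the difference of these two counts is a walk in t
   that climbs from <= 0 to >= 0 with steps 1 - [x = o] for even o and
   1 + [x = o] for odd o, x being the letter passed.  A flat step at 0, resp. a
   jump from -1 to 1, occurs exactly at a fixed card of option o of u, so the
   walk vanishes 1 + F(u), resp. 1 - F(u), times.  Summing over the (2m+1)^n
   words u gives S(n+1) = (2m+1)^n + (-1)^o S(n) for the total number S(n) of
   fixed cards of option o.  The expected number of fixed points is therefore
   the sum over i < n of (2m+1)^-i for even i and (2m+1)^-(i+1) for odd i, and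
   grouping these terms in pairs gives the formula. *)

From mathcomp Require Import all_boot all_order all_algebra all_fingroup.
From mathcomp Require Import zify ring.
Import Order.TTheory GRing.Theory Num.Theory.

Lemma sum_count_eq (T : Type) (f : T -> nat) k s :
  \sum_(i <- iota 0 k) count (fun x => f x == i) s = count (fun x => f x < k) s.
Proof.
elim: k => [|k IH]; first by rewrite big_nil; elim: s.
rewrite -addn1 iotaD big_cat big_seq1 IH add0n.
by elim: s {IH} => //= x s <-; rewrite addn1 ltnS; case: ltngtP; lia.
Qed.

Lemma count_nth_take (P : pred nat) w c : c <= size w ->
  count (fun t => P (nth 0 w t)) (iota 0 c) = count P (take c w).
Proof. by move=> le_cw; rewrite -(map_nth_iota0 0) // count_map. Qed.

Lemma count_nth_drop (P : pred nat) w c :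
  count (fun t => P (nth 0 w t)) (iota c (size w - c)) = count P (drop c w).
Proof. by rewrite -[drop c w]take_size -(map_nth_iota 0) ?count_map // size_drop. Qed.

Lemma card_ord_count n (P : pred nat) : #|[set i : 'I_n | P i]| = count P (iota 0 n).
Proof. by rewrite -sum1dep_card sum1_count -val_enum_ord count_map enumT. Qed.

Local Open Scope ring_scope.

Lemma zero_crossing_step {a b : int} : a <= b <= a + 2 ->
  (b == 0)%R%:Z = (0 <= b)%R%:Z - (0 <= a)%R%:Z
                  + ((a == 0) && (b == 0))%R%:Z - ((a == -1) && (b == 1))%R%:Z.
Proof. lia. Qed.

Lemma count_eq0_walk (f : nat -> int) n :
    (forall t, (t < n)%N -> f t <= f t.+1 <= f t + 2) -> f 0%N <= 0 <= f n ->
  (count (fun t => f t == 0) (iota 0 n.+1))%:Z =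
  1 + (count (fun t => (f t == 0) && (f t.+1 == 0)) (iota 0 n))%:Z
    - (count (fun t => (f t == -1) && (f t.+1 == 1)) (iota 0 n))%:Z.
Proof.
move=> step /andP[f0 fn].
suff telescope : forall k, (k <= n)%N ->
  (count (fun t => f t == 0) (iota 0 k.+1))%:Z =
  (0 <= f k)%R%:Z - (0 < f 0%N)%R%:Z
    + (count (fun t => (f t == 0) && (f t.+1 == 0)) (iota 0 k))%:Z
    - (count (fun t => (f t == -1) && (f t.+1 == 1)) (iota 0 k))%:Z.
  by rewrite telescope // fn ltNge f0.
elim=> [_ | k IH lt_kn]; first by rewrite /=; lia.
have iotaSr t : iota 0 t.+1 = iota 0 t ++ [:: t] by rewrite -addn1 iotaD.
rewrite [in LHS]iotaSr count_cat PoszD IH ?(ltnW lt_kn) //.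
rewrite (iotaSr k) !count_cat /= !addn0 !PoszD.
have := zero_crossing_step (step k lt_kn); lia.
Qed.

Local Close Scope ring_scope.

(* Option o puts a card on shelf (o+1)/2, on top iff o is odd, so the deck lists
   the cards by increasing option, those of an odd option in reverse processing
   order.  A card of option x processed before (resp. after) a card of option o
   thus ends up below (resp. above) it iff [earlier_below o x]
   (resp. [later_above o x]). *)
Definition earlier_below (o x : nat) : bool := if odd o then o <= x else o < x.

Definition later_above (o x : nat) : bool := if odd o then x <= o else x < o.

Definition deck_pos (w : seq nat) (c : nat) : nat :=
  let o := nth 0 w c in
  count (predC (earlier_below o)) (take c w) + count (later_above o) (drop c.+1 w).

Definition num_fixed_option (o : nat) (w : seq nat) : nat :=
  count (fun c => (nth 0 w c == o) && (deck_pos w c == c)) (iota 0 (size w)).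

Lemma deck_posE w c (o := nth 0 w c) : c < size w ->
  deck_pos w c = count (fun x => x < o) w +
    (if odd o then count (pred1 o) (drop c.+1 w) else count (pred1 o) (take c w)).
Proof.
move=> lt_cw; rewrite /deck_pos /= -/o.
have split_lt : count (fun x => x < o) w =
    count (fun x => x < o) (take c w) + count (fun x => x < o) (drop c.+1 w).
  by rewrite -{1}(cat_take_drop c w) count_cat (drop_nth 0 lt_cw) /= ltnn.
have split_leq s : count (fun x => x <= o) s = count (fun x => x < o) s + count (pred1 o) s.
  by elim: s => //= x s ->; rewrite leq_eqVlt; case: ltngtP; lia.
rewrite split_lt /earlier_below /later_above; case: odd.
  rewrite split_leq (eq_count (a2 := fun x => x < o)) ?addnA // => x /=.
  by rewrite ltnNge.
rewrite (eq_count (a2 := fun x => x <= o)) ?split_leq 1?addnAC // => x.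
by rewrite leqNgt.
Qed.

Lemma count_fixed_by_option q w : all (fun x => x < q) w ->
  count (fun c => deck_pos w c == c) (iota 0 (size w)) = \sum_(o <- iota 0 q) num_fixed_option o w.
Proof.
move=> /allP w_q; rewrite /num_fixed_option.
under eq_bigr do rewrite -[count _ _]/(count (predI _ _) _) -count_filter.
rewrite sum_count_eq count_filter; apply: eq_in_count => c; rewrite mem_iota /= => lt_cw.
by rewrite w_q ?andbT // mem_nth.
Qed.

Definition insert_at (c x : nat) (u : seq nat) : seq nat := take c u ++ x :: drop c u.

Definition walk (o : nat) (u : seq nat) (t : nat) : int :=
  ((count (earlier_below o) (take t u))%:Z - (count (later_above o) (drop t u))%:Z)%R.

Lemma deck_pos_eqE w c : c <= size w -> (deck_pos w c == c) =
  (count (earlier_below (nth 0 w c)) (take c w) == count (later_above (nth 0 w c)) (drop c.+1 w)).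
Proof.
move=> le_cw; rewrite /deck_pos.
have := count_predC (earlier_below (nth 0 w c)) (take c w); rewrite size_takel //.
by move=> sz; apply/eqP/eqP; lia.
Qed.

Lemma deck_pos_insert_at c o u : c <= size u ->
  (deck_pos (insert_at c o u) c == c) = (walk o u c == 0%R).
Proof.
move=> le_cu; have sz_take : size (take c u) = c by rewrite size_takel.
rewrite deck_pos_eqE; last by rewrite size_cat /= sz_take leq_addr.
rewrite /insert_at nth_cat sz_take ltnn subnn /= take_size_cat //.
rewrite drop_cat sz_take ltnNge leqnSn subSnn /= /walk subr_eq0.
by rewrite drop0 eqz_nat.
Qed.

Lemma walk_step o u t : t < size u ->
  walk o u t.+1 = (walk o u t + (earlier_below o (nth 0%N u t) + later_above o (nth 0%N u t))%:Z)%R.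
Proof.
move=> lt_tu; rewrite /walk (take_nth 0 lt_tu) (drop_nth 0 lt_tu) -cats1 count_cat /=.
lia.
Qed.

Lemma below_above_step o x : earlier_below o x + later_above o x =
  (if odd o then (x == o).+1 else x != o).
Proof. by rewrite /earlier_below /later_above; case: (odd o); case: ltngtP. Qed.

Lemma deck_pos_eq_walk o u t : t < size u -> nth 0 u t = o ->
  (deck_pos u t == t) = (walk o u t == - (odd o)%:Z)%R.
Proof.
move=> lt_tu ut_o; rewrite deck_pos_eqE ?(ltnW lt_tu) // ut_o /walk (drop_nth 0 lt_tu) ut_o /=.
have -> : later_above o o = odd o by rewrite /later_above leqnn ltnn; case: odd.
by case: (odd o); apply/eqP/eqP; lia.
Qed.

Lemma count_walk_eq0 o u :
  (count (fun t => walk o u t == 0) (iota 0 (size u).+1) =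
   1 + (-1) ^+ o * (num_fixed_option o u)%:Z :> int)%R.
Proof.
have step t : t < size u -> walk o u t.+1 =
    (walk o u t + (if odd o then (nth 0%N u t == o).+1 else nth 0%N u t != o)%:Z)%R.
  by move=> lt_tu; rewrite walk_step // below_above_step.
have step_bounds t : t < size u -> (walk o u t <= walk o u t.+1 <= walk o u t + 2)%R.
  by move=> lt_tu; rewrite step //; case: odd; case: eqP => _; lia.
have ends : (walk o u 0 <= 0 <= walk o u (size u))%R.
  by rewrite /walk take0 drop0 take_size drop_size /=; lia.
rewrite (count_eq0_walk _ _ step_bounds ends) -signr_odd /num_fixed_option.
pose fixed t := (nth 0 u t == o) && (deck_pos u t == t).
have crossing t : t < size u ->
    ((walk o u t == 0) && (walk o u t.+1 == 0), (walk o u t == -1) && (walk o u t.+1 == 1))%R =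
    (~~ odd o && fixed t, odd o && fixed t).
  move=> lt_tu; rewrite step // /fixed; case: (eqVneq (nth 0 u t) o) => [x_o | x_ne] /=.
    by rewrite (deck_pos_eq_walk _ _ _ lt_tu x_o); case: (odd o); congr pair; lia.
  by case: (odd o); congr pair; lia.
rewrite (eq_in_count (a1 := fun t => (walk o u t == 0)%R && (walk o u t.+1 == 0))
                    (a2 := fun t => ~~ odd o && fixed t)); last first.
  by move=> t; rewrite mem_iota add0n => /crossing/(congr1 fst).
rewrite (eq_in_count (a1 := fun t => (walk o u t == -1)%R && (walk o u t.+1 == 1))
                    (a2 := fun t => odd o && fixed t)); last first.
  by move=> t; rewrite mem_iota add0n => /crossing/(congr1 snd).
have count0 : count xpred0 (iota 0 (size u)) = 0 by elim: iota.
by case: (odd o); rewrite /= count0 /fixed; lia.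
Qed.

Fixpoint words (q n : nat) : seq (seq nat) :=
  if n is n'.+1 then [seq x :: w | x <- iota 0 q, w <- words q n'] else [:: [::]].

Lemma mem_words q n w : (w \in words q n) = (size w == n) && all (fun x => x < q) w.
Proof.
elim: n w => [|n IH] w; first by case: w.
apply/allpairsP/idP => [[[x u] /= [x_q u_n ->]] | ].
  by move: x_q u_n; rewrite mem_iota IH /= eqSS => -> /andP[-> ->].
case: w => // x w; rewrite /= eqSS => /and3P[w_n x_q w_q].
by exists (x, w); rewrite mem_iota IH w_n w_q.
Qed.

Lemma words_uniq q n : uniq (words q n).
Proof.
elim: n => //= n IH; apply: allpairs_uniq; rewrite ?iota_uniq //.
by move=> [x1 w1] [x2 w2] _ _ [-> ->].
Qed.

Lemma size_words q n : size (words q n) = q ^ n.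
Proof. by elim: n => //= n IH; rewrite size_allpairs size_iota IH expnS. Qed.

Lemma sum_iota_pick q o (F : nat -> nat) : o < q ->
  \sum_(x <- iota 0 q) (x == o) * F x = F o.
Proof.
move=> o_q; rewrite (bigD1_seq o) ?mem_iota ?iota_uniq //= eqxx mul1n big1 ?addn0 //.
by move=> x /negbTE ->.
Qed.

Lemma sum_words_insert_at q o c n (F : seq nat -> nat) : o < q -> c <= n ->
  \sum_(w <- words q n.+1) (nth 0 w c == o) * F w =
  \sum_(u <- words q n) F (insert_at c o u).
Proof.
move=> o_q; elim: c n F => [|c IH] n F le_cn /=; rewrite big_allpairs_dep /=.
  rewrite (eq_bigr (fun x => (x == o) * \sum_(u <- words q n) F (x :: u))); last first.
    by move=> x _; rewrite big_distrr.
  by rewrite sum_iota_pick //; apply: eq_bigr => u _; rewrite /insert_at take0 drop0.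
case: n le_cn => // n le_cn; rewrite big_allpairs_dep.
by apply: eq_bigr => x _; rewrite IH.
Qed.

Lemma num_fixed_optionE o w : num_fixed_option o w =
  \sum_(c <- iota 0 (size w)) (nth 0 w c == o) * (deck_pos w c == c).
Proof.
rewrite /num_fixed_option -sumn_count sumnE big_map.
by apply: eq_bigr => c _; rewrite mulnb.
Qed.

Definition total_fixed_option (q o n : nat) : nat :=
  \sum_(w <- words q n) num_fixed_option o w.

Lemma total_fixed_optionS q o n : o < q ->
  (total_fixed_option q o n.+1 = (q ^ n)%N%:Z + (-1) ^+ o * (total_fixed_option q o n)%:Z :> int)%R.
Proof.
move=> o_q; rewrite /total_fixed_option.
have size_in n' w : w \in words q n' -> size w = n' by rewrite mem_words => /andP[/eqP].
under eq_bigr do rewrite num_fixed_optionE.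
rewrite (eq_big_seq (fun w => \sum_(c <- iota 0 n.+1) (nth 0 w c == o) * (deck_pos w c == c)));
  last by move=> w /size_in ->.
(* Remove the card [c] of option [o] from [w]: [w = insert_at c o u]. *)
rewrite exchange_big (eq_big_seq (fun c => \sum_(u <- words q n) (walk o u c == 0%R))); last first.
  move=> c; rewrite mem_iota ltnS => /andP[_ le_cn]; rewrite sum_words_insert_at //.
  by apply: eq_big_seq => u /size_in u_n; rewrite deck_pos_insert_at // u_n.
rewrite exchange_big
  (eq_big_seq (fun u => count (fun t => walk o u t == 0%R) (iota 0 (size u).+1)));
  last by move=> u /size_in ->; rewrite -sumn_count sumnE big_map.
rewrite -!natz !natr_sum; under eq_bigr do rewrite natz count_walk_eq0.
rewrite big_split /= -mulr_sumr -size_words -sum1_size natr_sum.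
do 2 apply: f_equal2 => //.
by apply: eq_bigr => u _; rewrite natz.
Qed.

Lemma total_fixed_option_mean (R : numFieldType) q o n : o < q ->
  ((total_fixed_option q o n)%:R / (q ^ n)%:R =
   \sum_(i < n) (-1) ^+ (o * i) / q%:R ^+ i.+1 :> R)%R.
Proof.
move=> o_q; have q_neq0 : (q%:R != 0 :> R)%R by rewrite pnatr_eq0 -lt0n (leq_ltn_trans _ o_q).
elim: n => [|n IH]; first by rewrite big_ord0 /total_fixed_option big_seq1 mul0r.
have := congr1 (fun z : int => (z%:~R : R)%R) (total_fixed_optionS q o n o_q).
rewrite /= intrD intrM intr_sign -!pmulrn => ->.
rewrite big_ord_recl muln0 expr0 expr1.
have -> : (\sum_(i < n) (-1) ^+ (o * lift ord0 i) / q%:R ^+ (lift ord0 i).+1 =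
          (-1) ^+ o / q%:R * \sum_(i < n) (-1) ^+ (o * i) / q%:R ^+ i.+1 :> R)%R.
  by rewrite mulr_sumr; apply: eq_bigr => i _; rewrite /= mulnS exprD exprS invfM mulrACA.
rewrite -IH !natrX exprS; field.
by rewrite expf_neq0 // q_neq0.
Qed.

Definition option_block (w : seq nat) (o : nat) : seq nat :=
  let s := [seq t <- iota 0 (size w) | nth 0 w t == o] in if odd o then rev s else s.

Definition option_deck (q : nat) (w : seq nat) : seq nat :=
  flatten [seq option_block w o | o <- iota 0 q].

Lemma mem_option_block w o t : (t \in option_block w o) = (t < size w) && (nth 0 w t == o).
Proof. by rewrite /option_block; case: odd; rewrite ?mem_rev mem_filter mem_iota andbC. Qed.

Lemma count_option_block a w o :
  count a (option_block w o) = count (fun t => nth 0 w t == o) (filter a (iota 0 (size w))).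
Proof.
rewrite /option_block !count_filter; case: odd; rewrite ?count_rev count_filter;
  by apply: eq_count => t; rewrite /= andbC.
Qed.

Lemma index_option_block w c (o := nth 0 w c) : c < size w ->
  index c (option_block w o) =
  if odd o then count (pred1 o) (drop c.+1 w) else count (pred1 o) (take c w).
Proof.
move=> lt_cw; pose after := iota c.+1 (size w - c.+1).
have split_iota : iota 0 (size w) = iota 0 c ++ c :: after.
  by rewrite -{1}(subnKC (ltnW lt_cw)) iotaD -(subnSK lt_cw).
have c_after : c \notin after by rewrite mem_iota ltnn.
have c_before : c \notin iota 0 c by rewrite mem_iota ltnn andbF.
rewrite /option_block split_iota filter_cat /= eqxx; case: odd => /=.
  rewrite rev_cat rev_cons -cats1 -catA index_cat mem_rev mem_filter (negbTE c_after) /=.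
  by rewrite andbF eqxx addn0 size_rev size_filter /after (count_nth_drop (pred1 o)).
rewrite index_cat mem_filter (negbTE c_before) /= eqxx addn0 size_filter.
by rewrite andbF (count_nth_take (pred1 o)) // ltnW.
Qed.

Lemma index_option_deck q w c : all (fun x => x < q) w -> c < size w ->
  index c (option_deck q w) = deck_pos w c.
Proof.
move=> /allP w_q lt_cw; rewrite deck_posE //; set o := nth 0 w c.
have o_q : o < q by apply/w_q/mem_nth.
rewrite /option_deck -(subnKC (ltnW o_q)) iotaD -(subnSK o_q) map_cat flatten_cat /= index_cat.
have c_in t : (c \in option_block w t) = (o == t) by rewrite mem_option_block lt_cw.
have -> : c \in flatten [seq option_block w t | t <- iota 0 o] = false.
  by apply/flatten_mapP => -[t]; rewrite mem_iota c_in => /andP[_ lt_to] /eqP o_t; lia.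
rewrite index_cat c_in eqxx index_option_block // size_flatten /shape -map_comp.
rewrite (eq_map (g := fun t => count (fun s => nth 0 w s == t) (iota 0 (size w)))); last first.
  by move=> t /=; rewrite -count_predT count_option_block filter_predT.
by rewrite sumnE big_map sum_count_eq (count_nth_take (fun x => x < o)) // take_size.
Qed.

Lemma perm_option_deck q w : all (fun x => x < q) w ->
  perm_eq (option_deck q w) (iota 0 (size w)).
Proof.
move=> /allP w_q; apply/seq.permP => a.
rewrite count_flatten -map_comp sumnE big_map.
under eq_bigr do rewrite /= count_option_block.
rewrite sum_count_eq count_filter; apply: eq_in_count => t; rewrite mem_iota => lt_tw /=.
by rewrite w_q ?andbT // mem_nth.
Qed.

Definition choice_word {n q} (ch : {ffun 'I_n -> 'I_q}) : seq nat :=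
  [seq val (ch i) | i <- enum 'I_n].

Lemma size_choice_word {n q} (ch : {ffun 'I_n -> 'I_q}) : size (choice_word ch) = n.
Proof. by rewrite size_map size_enum_ord. Qed.

Lemma nth_choice_word {n q} (ch : {ffun 'I_n -> 'I_q}) (i : 'I_n) : nth 0 (choice_word ch) i = ch i.
Proof. by rewrite (nth_map i) ?nth_ord_enum // size_enum_ord. Qed.

Lemma choice_word_bounded {n q} (ch : {ffun 'I_n -> 'I_q}) : all (fun x => x < q) (choice_word ch).
Proof. by apply/allP => _ /mapP[i _ ->]; apply: ltn_ord. Qed.

Lemma choice_word_inj n q : injective (@choice_word n q).
Proof.
move=> ch1 ch2 eq_w; apply/ffunP => i; apply: ord_inj.
by rewrite -!nth_choice_word eq_w.
Qed.

Lemma sum_choice_words n q (F : seq nat -> nat) :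
  \sum_(ch : {ffun 'I_n -> 'I_q}) F (choice_word ch) = \sum_(w <- words q n) F w.
Proof.
rewrite -(big_map (@choice_word n q) xpredT); apply/perm_big/uniq_perm.
- by rewrite map_inj_uniq ?index_enum_uniq //; apply: choice_word_inj.
- exact: words_uniq.
move=> w; rewrite mem_words; apply/mapP/andP => [[ch _ ->] | [/eqP w_n /allP w_q]].
  by rewrite size_choice_word choice_word_bounded.
have w_i (i : 'I_n) : nth 0 w i < q by apply/w_q/mem_nth; rewrite w_n.
exists [ffun i => Ordinal (w_i i)]; first exact: mem_index_enum.
apply: (@eq_from_nth _ 0) => [|k]; first by rewrite size_choice_word.
by rewrite w_n => lt_kn; rewrite -[k]/(val (Ordinal lt_kn)) nth_choice_word ffunE.
Qed.

Lemma shelf_pile {n k} (ch : {ffun 'I_n -> 'I_k}) (l : seq 'I_n) s :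
  foldl (fun p (i : 'I_n) => place (ch i) i p) (fun _ => [::]) l s =
  rev [seq i <- l | (shelf_of (ch i) == s) && on_top (ch i)] ++
  [seq i <- l | (shelf_of (ch i) == s) && ~~ on_top (ch i)].
Proof.
elim/last_ind: l s => [|l x IH] s //; rewrite foldl_rcons /place IH !filter_rcons.
case: (eqVneq (shelf_of (ch x)) s) => [<-|ne]; rewrite ?eqxx ?(negbTE ne) //.
by case: on_top => /=; rewrite ?rev_rcons ?rcons_cat.
Qed.

Lemma map_val_filter_enum n (P : pred 'I_n) (Q : pred nat) : (forall i : 'I_n, P i = Q i) ->
  map val [seq i <- enum 'I_n | P i] = [seq t <- iota 0 n | Q t].
Proof. by move=> PQ; rewrite -val_enum_ord filter_map; congr map; apply: eq_filter. Qed.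

Lemma shelf_pile_blocks {n m} (ch : {ffun 'I_n -> 'I_(2 * m + 1)}) s (w := choice_word ch) :
  map val (foldl (fun p (i : 'I_n) => place (ch i) i p) (fun _ => [::]) (enum 'I_n) s) =
  if s is k.+1 then option_block w k.*2.+1 ++ option_block w k.*2.+2 else option_block w 0.
Proof.
rewrite shelf_pile map_cat map_rev /option_block size_choice_word /shelf_of /on_top.
case: s => [|k] /=.
  rewrite (map_val_filter_enum _ _ pred0) ?filter_pred0 => [|i /=]; last by lia.
  by apply: map_val_filter_enum => i; rewrite nth_choice_word; lia.
rewrite odd_double /= (map_val_filter_enum _ _ (fun t => nth 0 w t == k.*2.+1)); last first.
  by move=> i; rewrite nth_choice_word; lia.
by congr (_ ++ _); apply: map_val_filter_enum => i; rewrite nth_choice_word; lia.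
Qed.

Lemma flatten_shelf_blocks (T : Type) (B : nat -> seq T) m :
  flatten [seq (if s is k.+1 then B k.*2.+1 ++ B k.*2.+2 else B 0) | s <- iota 0 m.+1] =
  flatten [seq B o | o <- iota 0 (2 * m + 1)].
Proof.
elim: m => [|m IH]; first by rewrite /= !cats0.
rewrite -addn1 iotaD map_cat flatten_cat IH (_ : 2 * m.+1 + 1 = (2 * m + 1) + 2); last by lia.
rewrite [in RHS]iotaD map_cat flatten_cat /= !cats0.
by congr (_ ++ (B _ ++ B _)); lia.
Qed.

Lemma shelf_deck_option_deck {n m} (ch : {ffun 'I_n -> 'I_(2 * m + 1)}) :
  map val (shelf_deck ch) = option_deck (2 * m + 1) (choice_word ch).
Proof.
rewrite /shelf_deck map_flatten -map_comp /option_deck -flatten_shelf_blocks.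
by congr flatten; apply: eq_map => s; rewrite /= shelf_pile_blocks.
Qed.

Lemma shelf_deck_perm {n m} (ch : {ffun 'I_n -> 'I_(2 * m + 1)}) :
  perm_eq (map val (shelf_deck ch)) (iota 0 n).
Proof.
by rewrite shelf_deck_option_deck -{2}(size_choice_word ch) perm_option_deck ?choice_word_bounded.
Qed.

Lemma shelf_deck_uniq {n m} (ch : {ffun 'I_n -> 'I_(2 * m + 1)}) : uniq (shelf_deck ch).
Proof. by rewrite -(map_inj_uniq val_inj) (perm_uniq (shelf_deck_perm ch)) iota_uniq. Qed.

Lemma size_shelf_deck {n m} (ch : {ffun 'I_n -> 'I_(2 * m + 1)}) : size (shelf_deck ch) = n.
Proof. by rewrite -(size_map val) (perm_size (shelf_deck_perm ch)) size_iota. Qed.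

(* The default [i] of [nth] is never used: the deck has [n] cards. *)
Lemma shelf_perm_subproof {n m} (ch : {ffun 'I_n -> 'I_(2 * m + 1)}) :
  injective (fun i : 'I_n => nth i (shelf_deck ch) i).
Proof.
move=> i j /eqP; rewrite (set_nth_default i j) ?size_shelf_deck //.
by rewrite nth_uniq ?size_shelf_deck ?shelf_deck_uniq // => /eqP/val_inj.
Qed.

Definition shelf_perm {n m} (ch : {ffun 'I_n -> 'I_(2 * m + 1)}) : 'S_n :=
  perm (shelf_perm_subproof ch).

Lemma shelf_perm_deck {n m} (ch : {ffun 'I_n -> 'I_(2 * m + 1)}) :
  [seq shelf_perm ch i | i <- enum 'I_n] = shelf_deck ch.
Proof.
suff : [seq val (shelf_perm ch i) | i <- enum 'I_n] = map val (shelf_deck ch).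
  by move=> eq_val; apply: (inj_map val_inj); rewrite -map_comp.
have nth_deck (i : 'I_n) : val (shelf_perm ch i) = nth 0 (map val (shelf_deck ch)) i.
  by rewrite permE (nth_map i) ?size_shelf_deck.
rewrite (eq_map nth_deck) (map_comp (nth 0 _) val) val_enum_ord.
by rewrite map_nth_iota0 ?take_oversize // size_map size_shelf_deck.
Qed.

Lemma perm_enum_inj n (s t : 'S_n) :
  [seq s i | i <- enum 'I_n] = [seq t i | i <- enum 'I_n] -> s = t.
Proof. by move/eq_in_map=> eq_st; apply/permP => i; apply: eq_st; rewrite mem_enum. Qed.

Lemma num_fixed_points_shelf_perm {n m} (ch : {ffun 'I_n -> 'I_(2 * m + 1)}) :
  num_fixed_points (shelf_perm ch) =
  count (fun c => deck_pos (choice_word ch) c == c) (iota 0 n).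
Proof.
rewrite /num_fixed_points -card_ord_count; apply: eq_card => i; rewrite !inE.
have /perm_uniq uniq_deck := shelf_deck_perm ch; rewrite iota_uniq in uniq_deck.
have i_deck : val i \in map val (shelf_deck ch).
  by rewrite (perm_mem (shelf_deck_perm ch)) mem_iota /=.
rewrite -val_eqE permE -(nth_map i 0) ?size_shelf_deck //.
have -> : (nth 0 (map val (shelf_deck ch)) i == i) = (index (val i) (map val (shelf_deck ch)) == i).
  apply/eqP/eqP => [nth_i | index_i].
    by rewrite -[val i]nth_i index_uniq // size_map size_shelf_deck.
  by rewrite -{1}index_i nth_index.
by rewrite shelf_deck_option_deck index_option_deck ?choice_word_bounded ?size_choice_word ?ltn_ord.
Qed.

Lemma expected_fixed_points_sum n m :
  expected_fixed_points n m =
  ((\sum_(o <- iota 0 (2 * m + 1)) total_fixed_option (2 * m + 1) o n)%N%:R /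
   ((2 * m + 1) ^ n)%N%:R)%R.
Proof.
transitivity ((\sum_(pi : 'S_n)
    #|[set ch : {ffun 'I_n -> 'I_(2 * m + 1)} | shelf_deck ch == [seq pi i | i <- enum 'I_n]]| *
    num_fixed_points pi)%N%:R / ((2 * m + 1) ^ n)%N%:R : rat)%R.
  rewrite natr_sum mulr_suml; apply: eq_bigr => pi _.
  by rewrite /lazy_shelf natrM mulrAC.
congr (_%:R / _)%R.
transitivity (\sum_(ch : {ffun 'I_n -> 'I_(2 * m + 1)}) num_fixed_points (shelf_perm ch)).
  rewrite [RHS](partition_big (@shelf_perm n m) xpredT) //=; apply: eq_bigr => pi _.
  rewrite (eq_bigr (fun _ => num_fixed_points pi)) => [|ch /eqP -> //].
  rewrite (sum_nat_const [pred ch | shelf_perm ch == pi]); congr (_ * _); apply: eq_card => ch.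
  by rewrite !inE -shelf_perm_deck; apply/eqP/eqP => [/perm_enum_inj | ->].
rewrite (eq_bigr (fun ch => count (fun c => deck_pos (choice_word ch) c == c)
                                  (iota 0 (size (choice_word ch))))); last first.
  by move=> ch _; rewrite num_fixed_points_shelf_perm size_choice_word.
rewrite (sum_choice_words n (2 * m + 1)
  (fun w => count (fun c => deck_pos w c == c) (iota 0 (size w)))).
rewrite (eq_big_seq (fun w => \sum_(o <- iota 0 (2 * m + 1)) num_fixed_option o w)); last first.
  by move=> w; rewrite mem_words => /andP[_]; apply: count_fixed_by_option.
by rewrite exchange_big.
Qed.

Local Open Scope ring_scope.

Lemma sum_sign_powers (R : pzRingType) m i :
  \sum_(o <- iota 0 (2 * m + 1)) (-1) ^+ (o * i) = (if odd i then 1 else (2 * m + 1)%:R) :> R.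
Proof.
under eq_bigr do rewrite mulnC exprM -signr_odd.
case: odd => /=.
  elim: m => [|m IH]; first by rewrite big_seq1 expr0.
  rewrite (_ : (2 * m.+1 + 1 = (2 * m + 1) + 2)%N); last by lia.
  rewrite iotaD big_cat IH /= !big_cons big_nil add0n expr1 addn1 !exprS exprM sqrrN expr1n.
  by rewrite expr1n mulr1 mulN1r opprK addr0 addrA subrr add0r.
rewrite (eq_bigr (fun _ => 1)) => [|o _]; last by rewrite expr0 expr1n.
by rewrite -[X in X%:R](size_iota 0 (2 * m + 1)) -sum1_size natr_sum.
Qed.

Lemma expected_fixed_pointsE n m :
  expected_fixed_points n m =
  \sum_(i < n) (((2 * m + 1)%:R : rat) ^+ (if odd i then i.+1 else i))^-1.
Proof.
rewrite expected_fixed_points_sum natr_sum mulr_suml.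
rewrite (eq_big_seq (fun o => \sum_(i < n) (-1) ^+ (o * i) / (2 * m + 1)%:R ^+ i.+1)); last first.
  by move=> o; rewrite mem_iota => /andP[_ o_q]; apply: total_fixed_option_mean.
rewrite exchange_big; apply: eq_bigr => i _.
rewrite -mulr_suml sum_sign_powers; case: odd; first by rewrite mul1r.
by rewrite exprS invfM mulrA mulfV ?mul1r // pnatr_eq0 addn1.
Qed.

Lemma sum_parity_pairs (R : pzSemiRingType) (y : nat -> R) K :
  \sum_(i < (2 * K).+1) y (if odd i then i.+1 else i) =
  y 0%N + 2 * \sum_(1 <= k < K.+1) y (2 * k)%N.
Proof.
elim: K => [|K IH]; first by rewrite big_ord1 big_geq // mulr0 addr0.
rewrite (_ : (2 * K.+1).+1 = ((2 * K).+1).+2)%N; last by lia.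
rewrite 2!big_ord_recr /= IH (big_nat_recr K.+1) //= oddM /=.
rewrite (_ : (2 * K.+1 = (2 * K).+2)%N); last by lia.
by rewrite mulrDr -!addrA !mulr_natl !mulr2n.
Qed.

Theorem proposition5p2 (n m : nat) (hn : (0 < n)%N) (hm : (0 < m)%N) :
  expected_fixed_points n m =
  if odd n then
    1 + 2 * \sum_(1 <= k < (n.-1)./2.+1) (((2 * m + 1)%:R : rat) ^+ (2 * k))^-1
  else
    1 + 2 * \sum_(1 <= k < (n./2).-1.+1) (((2 * m + 1)%:R : rat) ^+ (2 * k))^-1
      + (((2 * m + 1)%:R : rat) ^+ n)^-1.
Proof.
rewrite expected_fixed_pointsE.
have pairs := sum_parity_pairs _ (fun j => (((2 * m + 1)%:R : rat) ^+ j)^-1).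
case: ifP => odd_n.
  have n_eq : n = (2 * (n.-1)./2).+1 by lia.
  by rewrite [in LHS]n_eq pairs expr0 invr1.
have n_eq : n = (2 * (n./2).-1).+2 by lia.
by rewrite [in LHS]n_eq big_ord_recr /= pairs expr0 invr1 oddM /= -n_eq.
Qed.
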